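(* Let $(G,V^\infty,T,k)$ be an instance of \textsc{OddMultiwayNodeCut} with $G$ a DAG, and let $M$ be a solution. Suppose there exists $v\in r_G(M)$ such that $M$ contains no important $v\rightarrow T$ separator. Then there exists a solution $M'$ such that: - $|M'|\le|M|$; - $r_G(M)\cup f_G(M)\cup M\subseteq r_G(M')\cup f_G(M')\cup M'$; - $r_G(M)\subsetneq r_G(M')$.
   Context: Paths are simple directed paths; a path is odd if it has an odd number of edges. An instance $(G,V^\infty,T,k)$ of \textsc{OddMultiwayNodeCut} consists of a DAG $G$, protected nodes $V^\infty\subseteq V(G)$, terminals $T\subseteq V^\infty$ and $k\in\mathbb{Z}_+$. A $T$-path has both ends in $T$. A solution is a set $M\subseteq V(G)\setminus V^\infty$ intersecting every odd $T$-path. $\mathcal{R}_H(X)$ is the set of nodes reachable from $X$ in $H$, including $X$. The shadows are $f_G(M):=V(G\setminus M)\setminus\mathcal{R}_{G\setminus M}(T)$, and $r_G(M):=$ the set of $v\in V(G)\setminus M$ with no path to $T$ in $G\setminus M$. For $X,Y\subseteq V(G)$, an $X\rightarrow Y$ separator is a set $S\subseteq V(G)\setminus V^\infty$ such that $G\setminus S$ has no path from $X$ to $Y$. An $X\rightarrow Y$ separator $S'$ dominates an $X\rightarrow Y$ separator $S$ if $|S'|\le|S|$ and $\mathcal{R}_{G\setminus S}(X)\subsetneq\mathcal{R}_{G\setminus S'}(X)$. An important $X\rightarrow Y$ separator is an inclusion-minimal $X\rightarrow Y$ separator that is dominated by no other $X\rightarrow Y$ separator. *)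

From mathcomp Require Import all_boot.
Set Implicit Arguments. Unset Strict Implicit. Unset Printing Implicit Defensive.

Section OMNC.
Variables (V : finType) (e : rel V).

Definition dag : Prop :=
  forall (x : V) (s : seq V), path e x s -> last x s = x -> s = [::].

(* A simple directed path x :: s (size s = number of edges) is an odd
   T-path if its ends are in T and it has an odd number of edges. *)
Definition odd_T_path (T : {set V}) (x : V) (s : seq V) : Prop :=
  [/\ path e x s, uniq (x :: s), x \in T, last x s \in T & odd (size s)].

Definition solution (Vinf T M : {set V}) : Prop :=
  M \subset ~: Vinf /\
  forall x s, odd_T_path T x s -> exists2 y, y \in x :: s & y \in M.

Definition edel (S : {set V}) : rel V :=
  [rel a b | [&& e a b, a \notin S & b \notin S]].

(* R_{G\S}(X): nodes of G \ S reachable in G \ S from X (including X \ S). *)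
Definition reach (S X : {set V}) : {set V} :=
  [set y | (y \notin S) && [exists x in X, (x \notin S) && connect (edel S) x y]].

Definition fshadow (T M : {set V}) : {set V} := (~: M) :\: reach M T.
Definition rshadow (T M : {set V}) : {set V} :=
  [set w | (w \notin M) &&
           ~~ [exists t in T, (t \notin M) && connect (edel M) w t]].

Definition separator (Vinf X Y S : {set V}) : Prop :=
  S \subset ~: Vinf /\ [disjoint reach S X & Y].

Definition dominates (X S' S : {set V}) : Prop :=
  #|S'| <= #|S| /\ reach S X \proper reach S' X.

Definition important (Vinf X Y S : {set V}) : Prop :=
  [/\ separator Vinf X Y S,
      (forall S' : {set V}, S' \proper S -> ~ separator Vinf X Y S') &
      (forall S' : {set V}, separator Vinf X Y S' -> ~ dominates X S' S)].

End OMNC.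

(* Let R be the set reached from v in G \ M and B the nodes of M entered from R;
   B separates v from T.  A minimum separator S inside B is inclusion-minimal
   and lies in M, so it is not important: some separator S' with
   |S'| <= |S| <= |B| reaches strictly more than R.  Put
   A := R_{G\S'}(v) :|: r_G(M) and M' := (M :|: N+(A)) :\: A.  No edge of G \ M'
   leaves A and A misses T, so A lies in r_G(M'); an odd T-path meeting M inside
   A must exit A through N+(A) \ A, which lies in M'.  The nodes of M' outside M
   belong to S' \ M and are paid for by B, which lies in (M :&: A) :|: S'.
   Finally R_{G\S'}(v) is larger than R only if it meets M, and those nodes of M
   enter r_G(M'). *)

From mathcomp Require Import all_boot zify.
Set Implicit Arguments. Unset Strict Implicit. Unset Printing Implicit Defensive.

Section Reach.
Variables (V : finType) (e : rel V).
Implicit Types (A B C M S T Vinf X Y : {set V}).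

Definition out_nbhd (A : {set V}) : {set V} := [set y | [exists x in A, e x y]].

Lemma connect_forward_closed (r : rel V) (C : {set V}) x y :
  x \in C -> (forall a b, a \in C -> r a b -> b \in C) -> connect r x y -> y \in C.
Proof.
move=> xC closC /connectP[p + ->]; elim: p x xC => //= z p IH x xC /andP[rxz pz].
exact: IH (closC _ _ xC rxz) pz.
Qed.

Lemma path_leaves_set (A : {set V}) x s y :
  path e x s -> y \in x :: s -> y \in A -> last x s \notin A ->
  exists2 b, b \in s & b \in out_nbhd A :\: A.
Proof.
elim: s x y => [|z s IH] x y /=.
  by move=> _; rewrite inE => /eqP-> ->.
move=> /andP[exz pz] yxs yA lastA.
have [xA | xA] := boolP (x \in A); last first.
  have yzs : y \in z :: s by move: yxs; rewrite inE => /predU1P[yx|//]; rewrite -yx yA in xA.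
  by have [b bs bA] := IH z y pz yzs yA lastA; exists b; rewrite // inE bs orbT.
have [zA | zA] := boolP (z \in A).
  by have [b bs bA] := IH z z pz (mem_head _ _) zA lastA; exists b; rewrite // inE bs orbT.
by exists z; rewrite ?mem_head // !inE zA; apply/existsP; exists x; rewrite xA.
Qed.

Lemma mem_reach S X x : x \in X -> x \notin S -> x \in reach e S X.
Proof.
by move=> xX xS; rewrite inE xS; apply/existsP; exists x; rewrite xX xS connect0.
Qed.

Lemma reach_step S X a b :
  a \in reach e S X -> e a b -> b \notin S -> b \in reach e S X.
Proof.
rewrite !inE => /andP[aS /existsP[x /and3P[xX xS cxa]]] ab bS.
rewrite bS; apply/existsP; exists x; rewrite xX xS.
by apply: connect_trans cxa (connect1 _); rewrite /edel /= ab aS bS.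
Qed.

Lemma reach_sub_closed S X C :
  X :\: S \subset C -> (forall a b, a \in C -> edel e S a b -> b \in C) ->
  reach e S X \subset C.
Proof.
move=> XC closC; apply/subsetP => y; rewrite inE => /andP[_ /existsP[x /and3P[xX xS cxy]]].
by apply: connect_forward_closed cxy; rewrite // (subsetP XC) // inE xS.
Qed.

Lemma reach_antimono S M X : S \subset M -> reach e M X \subset reach e S X.
Proof.
move=> SM; have notS y : y \notin M -> y \notin S by apply: contra; apply: subsetP.
apply: reach_sub_closed => [|a b aR /and3P[ab _ bM]].
  by apply/subsetP => x /setDP[xX xM]; rewrite mem_reach ?notS.
by rewrite (reach_step aR ab) ?notS.
Qed.

Lemma reach_subset_disjoint S M X :
  [disjoint reach e S X & M] -> reach e S X \subset reach e M X.
Proof.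
move=> RSM; have notM y : y \in reach e S X -> y \notin M by move/(disjointFr RSM) ->.
apply: subset_trans (subsetIl _ (reach e S X)).
apply: reach_sub_closed => [|a b /setIP[aM aS] /and3P[ab _ bS]].
  by apply/subsetP => x /setDP[xX xS]; rewrite inE !mem_reach // notM ?mem_reach.
have bS' := reach_step aS ab bS.
by rewrite inE bS' (reach_step aM ab) ?notM.
Qed.

Lemma rshadow_step T M a b :
  a \in rshadow e T M -> e a b -> b \notin M -> b \in rshadow e T M.
Proof.
rewrite !inE => /andP[aM noT] ab bM; rewrite bM; apply: contra noT.
case/existsP=> t /and3P[tT tM cbt]; apply/existsP; exists t; rewrite tT tM.
by apply: connect_trans (connect1 _) cbt; rewrite /edel /= ab aM bM.
Qed.

Lemma rshadow_disjoint T M : [disjoint rshadow e T M & T].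
Proof.
rewrite disjoint_subset; apply/subsetP => t; rewrite !inE => /andP[tM].
by apply: contra => tT; apply/existsP; exists t; rewrite tT tM connect0.
Qed.

Lemma reach_rshadow T M X :
  X \subset rshadow e T M -> reach e M X \subset rshadow e T M.
Proof.
move=> XW; apply: reach_sub_closed => [|a b aW /and3P[ab _ bM]].
  exact: subset_trans (subsetDl _ _) XW.
exact: rshadow_step aW ab bM.
Qed.

Lemma reach_boundary M X :
  [disjoint X & M] -> reach e (M :&: out_nbhd (reach e M X)) X \subset reach e M X.
Proof.
move=> XM; apply: reach_sub_closed => [|a b aR /and3P[ab _ bB]].
  by apply/subsetP => x /setDP[xX _]; rewrite mem_reach // (disjointFr XM).
apply: (reach_step aR ab); apply: contra bB => bM.
by rewrite !inE bM; apply/existsP; exists a; rewrite aR.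
Qed.

Lemma solution_disjoint Vinf T M :
  T \subset Vinf -> solution e Vinf T M -> [disjoint T & M].
Proof.
move=> TVinf [MVinf _]; rewrite disjoint_subset; apply/subsetP => t tT.
by rewrite !inE; apply: contraL (subsetP TVinf t tT) => /(subsetP MVinf); rewrite inE.
Qed.

Lemma min_separator_sub Vinf X Y B :
  separator e Vinf X Y B ->
  exists S, [/\ S \subset B, separator e Vinf X Y S &
    forall S2, S2 \subset B -> separator e Vinf X Y S2 -> #|S| <= #|S2|].
Proof.
case=> BVinf BY.
pose P := [pred S : {set V} |
  [&& S \subset B, S \subset ~: Vinf & [disjoint reach e S X & Y]]].
have PB : P B by rewrite /= subxx BVinf BY.
case: (arg_minnP (fun S : {set V} => #|S|) PB) => S /and3P[SB SVinf SY] Smin.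
exists S; split=> // S2 S2B [S2Vinf S2Y]; apply: Smin; by rewrite /= S2B S2Vinf S2Y.
Qed.

Lemma nonimportant_enlarge Vinf X Y M B :
  B \subset M -> separator e Vinf X Y B ->
  ~ (exists S, S \subset M /\ important e Vinf X Y S) ->
  exists S', [/\ separator e Vinf X Y S', #|S'| <= #|B|
    & reach e M X \proper reach e S' X].
Proof.
(* S, being of minimum size among the separators inside B, is inclusion-minimal;
   as it is not important, it must be dominated. *)
move=> BM sepB noimp; have [S [SB sepS minS]] := min_separator_sub sepB.
have RMS : reach e M X \subset reach e S X by apply: reach_antimono; exact: subset_trans BM.
have [/existsP[S2 /and4P[S2Vinf S2Y S2S RS2]] | nodom] := boolP [exists S2 : {set V},
  [&& S2 \subset ~: Vinf, [disjoint reach e S2 X & Y], #|S2| <= #|S|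
    & reach e S X \proper reach e S2 X]].
  exists S2; split=> //; last exact: sub_proper_trans RMS RS2.
  exact: leq_trans S2S (subset_leq_card SB).
case: noimp; exists S; split; first exact: subset_trans BM.
split=> // [S2 S2S sep2 | S2 [S2Vinf S2Y] [S2S RS2]].
  by have := minS S2 (subset_trans (proper_sub S2S) SB) sep2; rewrite leqNgt proper_card.
by move/negP: nodom; apply; apply/existsP; exists S2; rewrite S2Vinf S2Y S2S.
Qed.

Section Reroute.
Variables (Vinf T M X S : {set V}).
Hypotheses (TVinf : T \subset Vinf) (solM : solution e Vinf T M)
  (sepS : separator e Vinf X T S) (RMS : reach e M X \proper reach e S X).

Let A := reach e S X :|: rshadow e T M.
Let M' := (M :|: out_nbhd A) :\: A.

Lemma reroute_T_disjoint : [disjoint A & T].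
Proof. by rewrite disjoints_subset subUset -!disjoints_subset sepS.2 rshadow_disjoint. Qed.

Lemma reroute_out_nbhd : out_nbhd A :\: A \subset S :|: M.
Proof.
apply/subsetP => y /setDP[/[1!inE] /existsP[a /andP[aA ay]]].
rewrite /A in_setU negb_or => /andP[yR yW]; rewrite in_setU.
case/setUP: aA => [aR | aW].
  by case: (boolP (y \in S)) => //= yS; rewrite (reach_step aR ay yS) in yR.
by rewrite orbC; case: (boolP (y \in M)) => //= yM; rewrite (rshadow_step aW ay yM) in yW.
Qed.

Lemma reroute_closed a b : a \in A -> edel e M' a b -> b \in A.
Proof.
move=> aA /and3P[ab _]; apply: contraNT => bA.
rewrite in_setD bA in_setU inE /=; apply/orP; right.
by apply/existsP; exists a; rewrite aA.
Qed.

Lemma reroute_rshadow : A \subset rshadow e T M'.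
Proof.
apply/subsetP => a aA; rewrite [a \in rshadow _ _ _]inE in_setD aA /=.
apply/negP => /existsP[t /and3P[tT _ cat]].
by rewrite (disjointFr reroute_T_disjoint (connect_forward_closed aA reroute_closed cat)) in tT.
Qed.

Lemma reroute_sub : M' \subset (M :\: A) :|: (S :\: M).
Proof.
apply/subsetP => y; rewrite in_setD in_setU => /andP[yA /orP[yM | yN]].
  by rewrite in_setU in_setD yA yM.
have : y \in out_nbhd A :\: A by rewrite in_setD yA.
move/(subsetP reroute_out_nbhd); rewrite !in_setU !in_setD yA /=.
by case: (y \in M); rewrite ?orbT ?orbF.
Qed.

Lemma reroute_solution : solution e Vinf T M'.
Proof.
split.
  apply: subset_trans reroute_sub _; rewrite subUset.
  by rewrite !(subset_trans (subsetDl _ _)) ?solM.1 ?sepS.1.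
move=> x s Pxs; have [y ys yM] := solM.2 x s Pxs; case: Pxs => pxs _ _ lastT _.
have lastA : last x s \notin A by rewrite (disjointFl reroute_T_disjoint lastT).
have [yA | yA] := boolP (y \in A); last by exists y; rewrite // in_setD yA in_setU yM.
have [b bs /setDP[bN bA]] := path_leaves_set pxs ys yA lastA.
by exists b; [rewrite inE bs orbT | rewrite in_setD bA in_setU bN orbT].
Qed.

Lemma reroute_card :
  #|S| <= #|M :&: out_nbhd (reach e M X)| -> #|M'| <= #|M|.
Proof.
move=> cardS.
have bnd : M :&: out_nbhd (reach e M X) \subset (M :&: A) :|: (S :&: M).
  apply/subsetP => b /setIP[bM /[1!inE] /existsP[r /andP[rR rb]]].
  rewrite !in_setU !in_setI bM andbT /=; case: (boolP (b \in S)) => bS; first by rewrite orbT.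
  by rewrite in_setU (reach_step (subsetP (proper_sub RMS) r rR) rb bS).
have := leq_trans (subset_leq_card reroute_sub) (leq_card_setU _ _).
have := leq_trans (subset_leq_card bnd) (leq_card_setU _ _).
have := cardsID M S; have := cardsID A M; lia.
Qed.

Lemma reroute_reach_T : reach e M' T \subset A :|: reach e M T.
Proof.
apply: reach_sub_closed => [|a b /setUP[aA | aR] ab'].
- apply/subsetP => t /setDP[tT _].
  by rewrite in_setU mem_reach ?orbT // (disjointFr (solution_disjoint TVinf solM) tT).
- by rewrite in_setU (reroute_closed aA ab').
case/and3P: ab' => ab _ bM'; rewrite in_setU; case: (boolP (b \in A)) => //= bA.
by apply: (reach_step aR ab); apply: contra bM' => bM; rewrite in_setD bA in_setU bM.
Qed.

Lemma reroute_cover :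
  rshadow e T M :|: fshadow e T M :|: M \subset rshadow e T M' :|: fshadow e T M' :|: M'.
Proof.
apply/subsetP => x Hx.
have [xA | xA] := boolP (x \in A); first by rewrite !in_setU (subsetP reroute_rshadow x xA).
have [xM | xM] := boolP (x \in M); first by apply/setUP; right; rewrite in_setD xA in_setU xM.
have [xM' | xM'] := boolP (x \in M'); first by rewrite in_setU xM' orbT.
have xW : x \notin rshadow e T M by apply: contra xA; rewrite in_setU orbC => ->.
move: Hx; rewrite !in_setU (negbTE xW) (negbTE xM) orbF /= => /setDP[_ xR].
rewrite (negbTE xM') orbF; apply/orP; right; rewrite in_setD in_setC xM' andbT.
by apply/negP => /(subsetP reroute_reach_T); rewrite in_setU (negbTE xA) (negbTE xR).
Qed.

Lemma reroute_proper : rshadow e T M \proper rshadow e T M'.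
Proof.
have [m /setIP[mR mM]] : exists m, m \in reach e S X :&: M.
  apply/set0Pn; rewrite setI_eq0; apply/negP => RSM.
  by move: RMS; rewrite properE (reach_subset_disjoint RSM) andbF.
apply/properP; split; first exact: subset_trans (subsetUr _ _) reroute_rshadow.
exists m; first by apply: (subsetP reroute_rshadow); rewrite in_setU mR.
by rewrite inE mM.
Qed.

Lemma reroute :
  #|S| <= #|M :&: out_nbhd (reach e M X)| ->
  exists N : {set V},
    [/\ solution e Vinf T N, #|N| <= #|M|,
        rshadow e T M :|: fshadow e T M :|: M
          \subset rshadow e T N :|: fshadow e T N :|: N
      & rshadow e T M \proper rshadow e T N].
Proof.
move=> cardS; exists M'; split.
- exact: reroute_solution.
- exact: reroute_card.
- exact: reroute_cover.
exact: reroute_proper.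
Qed.

End Reroute.

End Reach.

Theorem lemma2p9 (V : finType) (e : rel V) (Vinf T : {set V}) (k : nat)
  (M : {set V}) (v : V) :
  dag e -> T \subset Vinf ->
  solution e Vinf T M ->
  v \in rshadow e T M ->
  ~ (exists S : {set V}, S \subset M /\ important e Vinf [set v] T S) ->
  exists M' : {set V},
    [/\ solution e Vinf T M',
        #|M'| <= #|M|,
        rshadow e T M :|: fshadow e T M :|: M
          \subset rshadow e T M' :|: fshadow e T M' :|: M'
      & rshadow e T M \proper rshadow e T M'].
Proof.
move=> _ TVinf solM vW noimp.
have vM : [disjoint [set v] & M].
  by rewrite disjoints_subset sub1set in_setC; move: vW; rewrite inE => /andP[].
have RT : [disjoint reach e M [set v] & T].
  by apply: disjointWl (rshadow_disjoint e T M); apply: reach_rshadow; rewrite sub1set.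
have sepB : separator e Vinf [set v] T (M :&: out_nbhd e (reach e M [set v])).
  split; first exact: subset_trans (subsetIl _ _) solM.1.
  exact: disjointWl (reach_boundary e vM) RT.
have [S [sepS cardS RS]] := nonimportant_enlarge (subsetIl _ _) sepB noimp.
exact: reroute TVinf solM sepS RS cardS.
Qed.
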